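(* Let $n,m\ge1$, $c_1,\dots,c_n>0$, $T>0$, $\epsilon>0$, $r_1,\dots,r_m>0$ and $\kappa_{ij}\ge0$. For $\mu\in\mathbb{R}^n$ let $\varphi^i_\epsilon(\mu)=-\epsilon\log\big(\sum_{j=1}^n e^{-(\kappa_{ij}+\mu_j)/\epsilon}\big)$, and define on $[0,T)^n$ $$D(\mu)=\sum_{i=1}^m r_i\varphi^i_\epsilon(\mu)+\sum_{j=1}^n c_j\log\Big(1-\frac{\mu_j}{T}\Big).$$ Then $D$ is strictly concave on $[0,T)^n$ and has a finite maximum $D^*$ over $[0,T)^n$, achieved at a unique $\mu^*\in[0,T)^n$.
   Context: $D$ is the Lagrange dual function of the station-assignment optimization problem (minimizing $\sum\kappa_{ij}x_{ij}+\sum_j\beta_j(q_j)+\epsilon\sum x_{ij}\log(x_{ij}/r_i)$ subject to $x_{ij}\ge0$, $\sum_jx_{ij}=r_i$, $\sum_ix_{ij}=q_j/T$), dualized with respect to the last constraint. *)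

From mathcomp Require Import all_boot all_order all_algebra.
From mathcomp Require Import reals.
From mathcomp Require Import sequences exp.
Set Implicit Arguments. Unset Strict Implicit. Unset Printing Implicit Defensive.
Import Order.TTheory GRing.Theory Num.Theory.
Local Open Scope ring_scope.

Definition phi_eps (R : realType) (n m : nat) (eps : R)
  (kappa : 'I_m -> 'I_n -> R) (i : 'I_m) (mu : 'I_n -> R) : R :=
  - eps * ln (\sum_(j < n) expR (- (kappa i j + mu j) / eps)).

Definition Dual (R : realType) (n m : nat) (c : 'I_n -> R) (T eps : R)
  (r : 'I_m -> R) (kappa : 'I_m -> 'I_n -> R) (mu : 'I_n -> R) : R :=
  \sum_(i < m) r i * phi_eps eps kappa i mu
  + \sum_(j < n) c j * ln (1 - mu j / T).

Definition in_box (R : realType) (n : nat) (T : R) (mu : 'I_n -> R) : Prop :=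
  forall j, 0 <= mu j /\ mu j < T.

Definition strictly_concave_on (R : realType) (n : nat)
  (S : ('I_n -> R) -> Prop) (f : ('I_n -> R) -> R) : Prop :=
  forall (x y : 'I_n -> R) (t : R), S x -> S y -> x <> y -> 0 < t < 1 ->
    t * f x + (1 - t) * f y < f (fun j => t * x j + (1 - t) * y j).

(* D is concave because each phi^i_eps is -eps times a log-sum-exp of affine
   functions of mu and log-sum-exp is convex; the barrier
   sum_j c_j log (1 - mu_j / T) is strictly concave since log is and the c_j are
   positive, so D is strictly concave and has at most one maximiser on the
   convex box.  For existence, phi^i_eps is monotone and commutes with adding
   constants, so phi^i_eps(mu) <= phi^i_eps(0) + T on the box; hence
   D(mu) < D(0) as soon as one c_j log (1 - mu_j / T) drops below
   -T sum_i r_i, and the maximum of D is that of its restriction to a compact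
   sub-box, where D is continuous. *)

From mathcomp Require Import all_boot all_order all_algebra.
From mathcomp Require Import reals.
From mathcomp Require Import sequences exp.
From mathcomp Require Import boolp classical_sets interval_inference.
From mathcomp Require Import topology normedtype derive convex.
From mathcomp Require Import ring lra.
Import Order.TTheory GRing.Theory Num.Theory.
Import numFieldNormedType.Exports.
Local Open Scope ring_scope.

Section real_inequalities.
Context {R : realType}.
Implicit Types (p q t x : R).

Lemma ln_le_subr1 x : 0 < x -> ln x <= x - 1.
Proof. by move=> x0; have := expR_ge1Dx (ln x); rewrite lnK ?posrE //; lra. Qed.

Lemma ln_lt_subr1 x : 0 < x -> x != 1 -> ln x < x - 1.
Proof.
move=> x0 x1; have := expR_gt1Dx (_ : ln x != 0).
by rewrite ln_eq0 // lnK ?posrE // => /(_ x1); lra.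
Qed.

Lemma ln_strictly_concave p q t : 0 < p -> 0 < q -> p != q -> 0 < t < 1 ->
  t * ln p + (1 - t) * ln q < ln (t * p + (1 - t) * q).
Proof.
move=> p0 q0 pq /andP[t0 t1]; set w := t * p + (1 - t) * q.
have w0 : 0 < w by rewrite /w; nra.
have ln_ratio z : 0 < z -> ln z = ln w + ln (z / w).
  by move=> z0; rewrite -lnM ?posrE ?divr_gt0 // mulrC divfK ?gt_eqF.
have pw : p / w != 1.
  rewrite -(inj_eq (mulIf (lt0r_neq0 w0))) divfK ?(lt0r_neq0 w0) // mul1r /w.
  by apply: contra pq => /eqP e; apply/eqP; nra.
have weights : t * (p / w - 1) + (1 - t) * (q / w - 1) = 0.
  by rewrite /w; field; rewrite -/w gt_eqF.
have := ln_lt_subr1 (p / w) (divr_gt0 p0 w0) pw; have := ln_le_subr1 (q / w) (divr_gt0 q0 w0).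
rewrite (ln_ratio p) // (ln_ratio q) //; nra.
Qed.

Lemma ln_concave p q t : 0 < p -> 0 < q -> 0 < t < 1 ->
  t * ln p + (1 - t) * ln q <= ln (t * p + (1 - t) * q).
Proof.
move=> p0 q0 t01; have [<-|pq] := eqVneq p q; last exact/ltW/ln_strictly_concave.
by rewrite -!mulrDl subrKC !mul1r.
Qed.

End real_inequalities.

Lemma one_sub_div_gt0 {R : realFieldType} (x T : R) : 0 < T -> x < T -> 0 < 1 - x / T.
Proof. by move=> T_gt0 xT; rewrite subr_gt0 ltr_pdivrMr // mul1r. Qed.

Lemma ltr_sum_le_lt {R : numDomainType} {I : finType} (F G : I -> R) (i0 : I) :
  (forall i, F i <= G i) -> F i0 < G i0 -> \sum_i F i < \sum_i G i.
Proof.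
by move=> FG lt0; rewrite (bigD1 i0) // [ltRHS](bigD1 i0) //= ltr_leD // ler_sum.
Qed.

Section log_sum_exp.
Context {R : realType} {n : nat}.
Hypothesis n_gt0 : (0 < n)%N.
Implicit Types (u v : 'I_n -> R).

Lemma sum_expR_gt0 u : 0 < \sum_j expR (u j).
Proof.
by rewrite (bigD1 (Ordinal n_gt0)) //= ltr_wpDr ?expR_gt0 // sumr_ge0.
Qed.

Lemma ln_sum_expR_convex u v t : 0 <= t <= 1 ->
  ln (\sum_j expR (t * u j + (1 - t) * v j))
  <= t * ln (\sum_j expR (u j)) + (1 - t) * ln (\sum_j expR (v j)).
Proof.
move=> /andP[t0 t1]; set A := \sum_j expR (u j); set B := \sum_j expR (v j).
have A0 : 0 < A := sum_expR_gt0 u; have B0 : 0 < B := sum_expR_gt0 v.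
set L := t * ln A + (1 - t) * ln B.
rewrite -ler_expR lnK ?posrE ?sum_expR_gt0 //.
have termwise j : expR (t * u j + (1 - t) * v j)
    <= expR L * (t * (expR (u j) / A) + (1 - t) * (expR (v j) / B)).
  have -> : t * u j + (1 - t) * v j
      = L + (t * (u j - ln A) + (1 - t) * (v j - ln B)) by rewrite /L; ring.
  have ratio x X : 0 < X -> expR x / X = expR (x - ln X).
    by move=> X0; rewrite expRD expRN lnK.
  rewrite expRD ler_pM2l ?expR_gt0 // !ratio //.
  exact: (convex_expR (Itv01 t0 t1)).
apply: le_trans (ler_sum _ (fun j _ => termwise j)) _.
rewrite -mulr_sumr big_split /= -!mulr_sumr -!mulr_suml -/A -/B.
by rewrite !divff ?gt_eqF // !mulr1 subrKC mulr1.
Qed.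

End log_sum_exp.

Section entropic_potential.
Context {R : realType} {n m : nat} (eps : R) (kappa : 'I_m -> 'I_n -> R) (i : 'I_m).
Hypotheses (n_gt0 : (0 < n)%N) (eps_gt0 : 0 < eps).
Implicit Types (mu nu : 'I_n -> R).

Lemma phi_eps_concave mu nu t : 0 <= t <= 1 ->
  t * phi_eps eps kappa i mu + (1 - t) * phi_eps eps kappa i nu
  <= phi_eps eps kappa i (fun j => t * mu j + (1 - t) * nu j).
Proof.
move=> t01; rewrite /phi_eps.
have := ln_sum_expR_convex n_gt0 (fun j => - (kappa i j + mu j) / eps)
  (fun j => - (kappa i j + nu j) / eps) t t01.
have -> : \sum_j expR (- (kappa i j + (t * mu j + (1 - t) * nu j)) / eps)
    = \sum_j expR (t * (- (kappa i j + mu j) / eps) + (1 - t) * (- (kappa i j + nu j) / eps)).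
  by apply: eq_bigr => j _; congr expR; ring.
by rewrite -(ler_pM2l eps_gt0); lra.
Qed.

Lemma phi_eps_le mu nu : (forall j, mu j <= nu j) ->
  phi_eps eps kappa i mu <= phi_eps eps kappa i nu.
Proof.
move=> munu; rewrite /phi_eps !mulNr lerN2 ler_pM2l // ler_ln ?posrE ?sum_expR_gt0 //.
by apply: ler_sum => j _; rewrite ler_expR ler_pM2r ?invr_gt0 // lerN2 lerD2l.
Qed.

Lemma phi_eps_addc mu a :
  phi_eps eps kappa i (fun j => mu j + a) = phi_eps eps kappa i mu + a.
Proof.
rewrite /phi_eps.
have -> : \sum_j expR (- (kappa i j + (mu j + a)) / eps)
    = \sum_j expR (- a / eps) * expR (- (kappa i j + mu j) / eps).
  by apply: eq_bigr => j _; rewrite -expRD; congr expR; ring.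
rewrite -mulr_sumr lnM ?posrE ?expR_gt0 ?sum_expR_gt0 // expRK.
by field; rewrite gt_eqF.
Qed.

End entropic_potential.

Section continuity.
Context {R : realType} {X : topologicalType} {n m : nat} (p : 'I_n -> X -> R) (x : X).
Hypotheses (n_gt0 : (0 < n)%N) (p_cont : forall j, {for x, continuous (p j)}).

Lemma phi_eps_continuous_at (eps : R) (kappa : 'I_m -> 'I_n -> R) i :
  {for x, continuous (fun y => phi_eps eps kappa i (p ^~ y))}.
Proof.
apply: cvgMl_tmp; apply: continuous_comp; last exact/continuous_ln/sum_expR_gt0.
apply: cvg_big => // [|j _]; first exact: add_continuous.
apply: continuous_comp; last exact: continuous_expR.
by apply: cvgMr_tmp; apply: cvgN; apply: cvgD; [exact: cvg_cst | exact: p_cont].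
Qed.

Lemma Dual_continuous_at (c : 'I_n -> R) (T eps : R) (r : 'I_m -> R)
    (kappa : 'I_m -> 'I_n -> R) :
  0 < T -> (forall j, p j x < T) ->
  {for x, continuous (fun y => Dual c T eps r kappa (p ^~ y))}.
Proof.
move=> T_gt0 pT; apply: cvgD.
  apply: cvg_big => // [|i _]; first exact: add_continuous.
  by apply: cvgMl_tmp; exact: phi_eps_continuous_at.
apply: cvg_big => // [|j _]; first exact: add_continuous.
apply: cvgMl_tmp; apply: continuous_comp.
  by apply: cvgB; [exact: cvg_cst | apply: cvgMr_tmp; exact: p_cont].
by apply/continuous_ln/one_sub_div_gt0.
Qed.

End continuity.

Lemma in_box_convex {R : realType} {n : nat} (T : R) (x y : 'I_n -> R) (t : R) :
  in_box T x -> in_box T y -> 0 < t < 1 -> in_box T (fun j => t * x j + (1 - t) * y j).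
Proof.
by move=> xb yb /andP[t0 t1] j; have [x0 xT] := xb j; have [y0 yT] := yb j; split; nra.
Qed.

Lemma strictly_concave_argmax_unique {R : realType} {n : nat}
    {S : ('I_n -> R) -> Prop} {f : ('I_n -> R) -> R} {x y : 'I_n -> R} :
  (forall x y t, S x -> S y -> 0 < t < 1 -> S (fun j => t * x j + (1 - t) * y j)) ->
  strictly_concave_on S f -> S x -> S y ->
  (forall z, S z -> f z <= f x) -> (forall z, S z -> f z <= f y) -> x = y.
Proof.
move=> S_convex f_concave Sx Sy x_max y_max; apply: contrapT => xy.
have half : 0 < (2^-1 : R) < 1 by rewrite invr_gt0 invf_lt1 ?ltr0n ?ltr1n.
have := f_concave x y 2^-1 Sx Sy xy half.
have := x_max _ (S_convex x y _ Sx Sy half); have := y_max x Sx; have := x_max y Sy.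
lra.
Qed.

Section dual_function.
Context {R : realType} {n m : nat} (c : 'I_n -> R) (T eps : R) (r : 'I_m -> R)
  (kappa : 'I_m -> 'I_n -> R).
Hypotheses (n_gt0 : (0 < n)%N) (c_gt0 : forall j, 0 < c j) (T_gt0 : 0 < T)
  (eps_gt0 : 0 < eps) (r_gt0 : forall i, 0 < r i).
Local Notation D := (Dual c T eps r kappa).

Lemma sum_barrier_strictly_concave (x y : 'I_n -> R) t :
  (forall j, x j < T) -> (forall j, y j < T) -> x <> y -> 0 < t < 1 ->
  t * \sum_j c j * ln (1 - x j / T) + (1 - t) * \sum_j c j * ln (1 - y j / T)
  < \sum_j c j * ln (1 - (t * x j + (1 - t) * y j) / T).
Proof.
move=> xT yT xy t01.
have /existsP[j0 xy0] : [exists j, x j != y j].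
  by apply: contra_notT xy => /existsPn xy_eq; apply/funext => j; apply/eqP/negbNE/xy_eq.
have conv j : 1 - (t * x j + (1 - t) * y j) / T = t * (1 - x j / T) + (1 - t) * (1 - y j / T).
  by ring.
rewrite !mulr_sumr -big_split /=; apply: (ltr_sum_le_lt _ _ j0) => [j|].
  by rewrite mulrCA [X in _ + X]mulrCA -mulrDr ler_pM2l // conv ln_concave
    ?one_sub_div_gt0 ?xT ?yT.
rewrite mulrCA [X in _ + X]mulrCA -mulrDr ltr_pM2l // conv.
rewrite ln_strictly_concave ?one_sub_div_gt0 ?xT ?yT //.
by apply: contra xy0 => /eqP/addrI/oppr_inj/(mulIf (invr_neq0 (lt0r_neq0 T_gt0)))/eqP.
Qed.

Lemma Dual_strictly_concave : strictly_concave_on (in_box T) D.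
Proof.
move=> x y t xb yb xy t01; rewrite /Dual.
have t01' : 0 <= t <= 1 by case/andP: t01 => t0 t1; rewrite !ltW.
have phi_part : t * \sum_i r i * phi_eps eps kappa i x
      + (1 - t) * \sum_i r i * phi_eps eps kappa i y
    <= \sum_i r i * phi_eps eps kappa i (fun j => t * x j + (1 - t) * y j).
  rewrite !mulr_sumr -big_split /=; apply: ler_sum => i _.
  by rewrite mulrCA [X in _ + X]mulrCA -mulrDr ler_pM2l // phi_eps_concave.
have := sum_barrier_strictly_concave _ _ _ (fun j => (xb j).2) (fun j => (yb j).2) xy t01.
lra.
Qed.

Lemma Dual_le_barrier (mu : 'I_n -> R) j : in_box T mu ->
  D mu <= D (fun=> 0) + T * \sum_i r i + c j * ln (1 - mu j / T).
Proof.
move=> mub; rewrite /Dual [X in _ <= _ + X + _ + _]big1 => [|k _]; last first.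
  by rewrite mul0r subr0 ln1 mulr0.
have phi_le i : phi_eps eps kappa i mu <= phi_eps eps kappa i (fun=> 0) + T.
  rewrite -phi_eps_addc //; apply: phi_eps_le => // k.
  by rewrite add0r; exact/ltW/(mub k).2.
have barrier_le : \sum_k c k * ln (1 - mu k / T) <= c j * ln (1 - mu j / T).
  rewrite (bigD1 j) //= gerDl sumr_le0 // => k _.
  by rewrite pmulr_rle0 // ln_le0 // gerBl divr_ge0 ?(mub k).1 // ltW.
rewrite addr0 mulr_sumr -big_split /=; apply: lerD barrier_le; apply: ler_sum => i _.
by rewrite [T * _]mulrC -mulrDr ler_pM2l.
Qed.

Lemma Dual_lt_Dual0 (mu : 'I_n -> R) j : in_box T mu ->
  T - T * expR (- (T * \sum_i r i) / c j) < mu j -> D mu < D (fun=> 0).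
Proof.
move=> mub mu_large; have := Dual_le_barrier mu j mub.
suff : c j * ln (1 - mu j / T) < - (T * \sum_i r i) by lra.
rewrite mulrC -ltr_pdivlMr //.
rewrite -ltr_expR lnK ?posrE ?one_sub_div_gt0 ?(mub j).2 //.
by rewrite -(ltr_pM2l T_gt0) mulrBr mulr1 [T * (_ / T)]mulrC divfK ?gt_eqF //; lra.
Qed.

Lemma Dual_argmax_exists :
  exists2 mu, in_box T mu & forall nu, in_box T nu -> D nu <= D mu.
Proof.
pose b j := T - T * expR (- (T * \sum_i r i) / c j).
have S_ge0 : 0 <= \sum_i r i by apply: sumr_ge0 => i _; exact: ltW.
have b_ge0 j : 0 <= b j.
  by rewrite subr_ge0 ger_pMr // -expR0 ler_expR mulNr oppr_le0 divr_ge0 ?mulr_ge0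
    ?(ltW T_gt0) ?(ltW (c_gt0 j)).
have b_ltT j : b j < T by rewrite ltrBlDr ltrDl mulr_gt0 ?expR_gt0.
pose K := [set mu : {ptws 'I_n -> R} | forall j, `[0, b j] (mu j)]%classic.
have K_box mu : K mu -> in_box T mu.
  move=> muK j; have := muK j; rewrite /= in_itv /= => /andP[mu0 mub].
  by split => //; exact: le_lt_trans mub (b_ltT j).
have [mu /set_mem muK mu_max] : exists2 mu, mu \in K & forall nu, nu \in K -> D nu <= D mu.
  apply: compact_EVT_max.
  - by exists (fun=> 0) => j; rewrite /= in_itv /= lexx b_ge0.
  - exact: (@tychonoff _ (fun=> R) (fun j => `[0, b j]%classic)
             (fun j => @segment_compact R 0 (b j))).
  - apply: continuous_in_subspaceT => x /set_mem/K_box xb.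
    apply: (Dual_continuous_at (fun j (y : {ptws 'I_n -> R}) => y j)) => // j.
      exact: (@proj_continuous _ (fun=> R) j).
    exact: (xb j).2.
exists mu; first exact: K_box.
move=> nu nub; have [nu_le_b|] := boolP [forall j, nu j <= b j].
  by apply: mu_max; apply/mem_set => j; rewrite /= in_itv /= (forallP nu_le_b) (nub j).1.
rewrite negb_forall => /existsP[j]; rewrite -ltNge => nu_large.
apply/ltW/(lt_le_trans (Dual_lt_Dual0 nu j nub nu_large))/mu_max/mem_set => j'.
by rewrite /= in_itv /= lexx b_ge0.
Qed.

End dual_function.

Theorem proposition2 (R : realType) (n m : nat) (hn : (1 <= n)%N) (hm : (1 <= m)%N)
  (c : 'I_n -> R) (T eps : R) (r : 'I_m -> R) (kappa : 'I_m -> 'I_n -> R)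
  (hc : forall j, 0 < c j) (hT : 0 < T) (heps : 0 < eps)
  (hr : forall i, 0 < r i) (hkappa : forall i j, 0 <= kappa i j) :
  strictly_concave_on (in_box T) (Dual c T eps r kappa) /\
  exists mustar : 'I_n -> R,
    [/\ in_box T mustar,
        (forall mu, in_box T mu -> Dual c T eps r kappa mu <= Dual c T eps r kappa mustar)
      & (forall mu, in_box T mu ->
           (forall nu, in_box T nu -> Dual c T eps r kappa nu <= Dual c T eps r kappa mu) ->
           mu = mustar)].
Proof.
have D_concave := Dual_strictly_concave c T eps r kappa hn hc hT heps hr.
have [mustar mustar_box mustar_max] := Dual_argmax_exists c T eps r kappa hn hc hT heps hr.
split=> //; exists mustar; split=> // mu mu_box mu_max.
exact: (strictly_concave_argmax_unique (in_box_convex T) D_concave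
          mu_box mustar_box mu_max mustar_max).
Qed.
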